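(* Let $n\ge1$ and $K=[1/\max(i,j)]_{i,j=1}^n$. Then $K$ is invertible, $\|K\|\le 4$, and $\|K^{-1}\|\le 4n^2$, where $\|\cdot\|$ denotes the operator (spectral) norm. *)

From HB Require Import structures.
From mathcomp Require Import all_boot all_order all_algebra.
From mathcomp Require Import classical_sets reals.
Set Implicit Arguments. Unset Strict Implicit. Unset Printing Implicit Defensive.
Import Order.TTheory GRing.Theory Num.Theory.
Local Open Scope ring_scope.
Local Open Scope classical_set_scope.

Definition vnorm2 (R : realType) (n : nat) (x : 'cV[R]_n) : R :=
  Num.sqrt (\sum_(i < n) x i 0 ^+ 2).

Definition opnorm (R : realType) (n : nat) (A : 'M[R]_n) : R :=
  sup [set vnorm2 (A *m x) / vnorm2 x | x in [set x : 'cV[R]_n | x != 0]].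

(* K = [1 / max(i,j)]_{i,j=1..n}  (1-based indices, so i.+1, j.+1). *)
Definition Kmat (R : realType) (n : nat) : 'M[R]_n :=
  \matrix_(i < n, j < n) ((maxn i.+1 j.+1)%:R)^-1.

From mathcomp Require Import all_boot all_order all_algebra.
From mathcomp Require Import reals.
From mathcomp Require Import ring lra zify.
Set Implicit Arguments.
Unset Strict Implicit.
Unset Printing Implicit Defensive.
Import Order.TTheory GRing.Theory Num.Theory.
Local Open Scope ring_scope.

(* The bound ||K|| <= 4 is a Schur test: with the weights w_k = 'C(2k, k) / 4^k,
   every row sum of K against w is at most 4 w_i.  For the inverse, writing
   1 / max(i, j) as a telescoping sum of the gaps 1/k - 1/(k+1) for
   max(i, j) <= k <= n (with 1/(n+1) replaced by 0) gives
   x^T K x = sum_k g_k (x_1 + ... + x_k)^2 with every g_k >= 1/n^2, while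
   |x|^2 <= 4 sum_k (x_1 + ... + x_k)^2.  Hence x^T K x >= |x|^2 / (4 n^2),
   which yields both the invertibility of K and ||K^-1|| <= 4 n^2. *)

Lemma mul_le_young (R : realFieldType) (a x y : R) :
  0 < a -> y * x <= (y ^+ 2 * a + x ^+ 2 / a) / 2.
Proof.
move=> a_gt0; rewrite -subr_ge0.
have -> : (y ^+ 2 * a + x ^+ 2 / a) / 2 - y * x = (y * a - x) ^+ 2 / (2 * a).
  by field; rewrite gt_eqF.
by rewrite divr_ge0 ?sqr_ge0 // mulr_ge0 // ltW.
Qed.

Section SchurTest.
Variables (R : realFieldType) (n : nat) (A : nat -> nat -> R) (w : nat -> R) (c : R).
Hypotheses (A_sym : forall i j, A i j = A j i) (A_ge0 : forall i j, 0 <= A i j).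
Hypothesis w_gt0 : forall i, 0 < w i.
Hypothesis A_row : forall i, (i < n)%N -> \sum_(0 <= j < n) A i j * w j <= c * w i.

Lemma schur_bilinear (t : R) (x y : nat -> R) : 0 < t ->
  \sum_(0 <= i < n) \sum_(0 <= j < n) A i j * (y i * x j)
    <= c / 2 * (t * \sum_(0 <= i < n) y i ^+ 2 + \sum_(0 <= j < n) x j ^+ 2 / t).
Proof.
move=> t_gt0.
(* Young's inequality with weight [t w_j / w_i] on the term [(i, j)]; the row
   bound then absorbs the weights. *)
pose a i j := t * w j / w i.
have a_gt0 i j : 0 < a i j by rewrite /a divr_gt0 ?mulr_gt0.
have rows : \sum_(0 <= i < n) \sum_(0 <= j < n) A i j * (y i ^+ 2 * a i j)
    <= c * (t * \sum_(0 <= i < n) y i ^+ 2).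
  rewrite mulr_sumr mulr_sumr; apply: ler_sum_nat => i /andP[_ i_lt].
  have -> : \sum_(0 <= j < n) A i j * (y i ^+ 2 * a i j)
      = y i ^+ 2 * t / w i * \sum_(0 <= j < n) A i j * w j.
    by rewrite mulr_sumr; apply: eq_bigr => j _; rewrite /a; ring.
  have -> : c * (t * y i ^+ 2) = y i ^+ 2 * t / w i * (c * w i).
    by field; rewrite gt_eqF.
  apply: ler_wpM2l (A_row i_lt).
  exact: divr_ge0 (mulr_ge0 (sqr_ge0 _) (ltW t_gt0)) (ltW (w_gt0 i)).
have cols : \sum_(0 <= i < n) \sum_(0 <= j < n) A i j * (x j ^+ 2 / a i j)
    <= c * (\sum_(0 <= j < n) x j ^+ 2 / t).
  rewrite exchange_big_nat mulr_sumr; apply: ler_sum_nat => j /andP[_ j_lt].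
  have -> : \sum_(0 <= i < n) A i j * (x j ^+ 2 / a i j)
      = x j ^+ 2 / (t * w j) * \sum_(0 <= i < n) A j i * w i.
    rewrite mulr_sumr; apply: eq_bigr => i _; rewrite A_sym /a.
    by field; rewrite !gt_eqF.
  have -> : x j ^+ 2 / t = x j ^+ 2 / (t * w j) * w j by field; rewrite !gt_eqF.
  rewrite mulrCA; apply: ler_wpM2l (A_row j_lt).
  by rewrite divr_ge0 ?sqr_ge0 // ltW // mulr_gt0.
apply: le_trans (_ : (\sum_(0 <= i < n) \sum_(0 <= j < n) A i j * (y i ^+ 2 * a i j)
   + \sum_(0 <= i < n) \sum_(0 <= j < n) A i j * (x j ^+ 2 / a i j)) / 2 <= _); last first.
  by have := lerD rows cols; lra.
rewrite -big_split /= mulr_suml; apply: ler_sum_nat => i _.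
rewrite -big_split /= mulr_suml; apply: ler_sum_nat => j _.
rewrite -mulrDr -mulrA; apply: ler_wpM2l => //.
exact: mul_le_young.
Qed.

Lemma schur_test (x : nat -> R) : 0 < c ->
  \sum_(0 <= i < n) (\sum_(0 <= j < n) A i j * x j) ^+ 2
    <= c ^+ 2 * \sum_(0 <= j < n) x j ^+ 2.
Proof.
move=> c_gt0; set Y := fun i => \sum_(0 <= j < n) A i j * x j.
have := @schur_bilinear c^-1 x Y; rewrite invr_gt0 => /(_ c_gt0).
have -> : \sum_(0 <= i < n) \sum_(0 <= j < n) A i j * (Y i * x j)
    = \sum_(0 <= i < n) Y i ^+ 2.
  by apply: eq_bigr => i _; rewrite expr2 mulr_sumr; apply: eq_bigr => j _; ring.
rewrite -mulr_suml invrK.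
have -> : c / 2 * (c^-1 * \sum_(0 <= i < n) Y i ^+ 2 + (\sum_(0 <= j < n) x j ^+ 2) * c)
    = (\sum_(0 <= i < n) Y i ^+ 2) / 2 + c ^+ 2 / 2 * \sum_(0 <= j < n) x j ^+ 2.
  by field; rewrite gt_eqF.
by rewrite /Y; lra.
Qed.

End SchurTest.

Section KmaxSchur.
Variable R : realFieldType.

Definition kmax (i j : nat) : R := ((maxn i.+1 j.+1)%:R)^-1.

Lemma kmaxC i j : kmax i j = kmax j i.
Proof. by rewrite /kmax maxnC. Qed.

Lemma kmax_ge0 i j : 0 <= kmax i j.
Proof. by rewrite /kmax invr_ge0 ler0n. Qed.

(* [binom_weight k = 'C(2k, k) / 4 ^ k]. *)
Fixpoint binom_weight (k : nat) : R :=
  if k is k'.+1 then binom_weight k' * (2 * k').+1%:R / (2 * k').+2%:R else 1.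

Lemma binom_weight_gt0 k : 0 < binom_weight k.
Proof.
elim: k => [|k IH] /=; first exact: ltr01.
by rewrite divr_gt0 // mulr_gt0 // ltr0n.
Qed.

Lemma binom_weight_decr k : binom_weight k.+1 <= binom_weight k.
Proof.
by rewrite /= ler_pdivrMr ?ltr0n // ler_pM2l ?binom_weight_gt0 // ler_nat.
Qed.

Lemma sum_binom_weight m :
  \sum_(0 <= j < m.+1) binom_weight j = (2 * m).+1%:R * binom_weight m.
Proof.
elim: m => [|m IH]; first by rewrite big_nat1 /= mulr1.
rewrite big_nat_recr //= IH.
have : (2 * m).+2%:R != 0 :> R by rewrite pnatr_eq0.
rewrite !mulnSr -!natr1 ?natrD ?natrM ?addr0 => nz.
by field.
Qed.

Lemma binom_weight_div_succ j :
  binom_weight j / j.+1%:R = 2 * (binom_weight j - binom_weight j.+1).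
Proof.
have : j.+1%:R != 0 :> R by rewrite pnatr_eq0.
have : (2 * j).+2%:R != 0 :> R by rewrite pnatr_eq0.
rewrite /= -!natr1 ?natrD ?natrM ?addr0 => nz2 nz1.
by field; rewrite nz1 nz2.
Qed.

Lemma kmax_row_binom_weight n i : (i < n)%N ->
  \sum_(0 <= j < n) kmax i j * binom_weight j <= 4 * binom_weight i.
Proof.
move=> i_lt; rewrite (big_cat_nat _ (n := i.+1)) //=.
have head : \sum_(0 <= j < i.+1) kmax i j * binom_weight j <= 2 * binom_weight i.
  have -> : \sum_(0 <= j < i.+1) kmax i j * binom_weight j
      = (i.+1%:R)^-1 * ((2 * i).+1%:R * binom_weight i).
    rewrite -sum_binom_weight big_distrr; apply: eq_big_nat => j /andP[_ j_le].
    by rewrite /kmax (maxn_idPl _).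
  rewrite mulrA ler_pM2r ?binom_weight_gt0 // ler_pdivrMl ?ltr0n // -natrM ler_nat.
  lia.
have tail : \sum_(i.+1 <= j < n) kmax i j * binom_weight j <= 2 * binom_weight i.
  have -> : \sum_(i.+1 <= j < n) kmax i j * binom_weight j
      = 2 * (binom_weight i.+1 - binom_weight n).
    rewrite (telescope_sumr_eq (fun k => - (2 * binom_weight k))) //; first ring.
    move=> k /andP[k_ge _].
    rewrite /kmax (maxn_idPr _) ?ltnS 1?ltnW // mulrC binom_weight_div_succ.
    ring.
  rewrite ler_pM2l ?ltr0n //.
  have := binom_weight_decr i; have := binom_weight_gt0 n; lra.
have := lerD head tail; lra.
Qed.

Lemma kmax_schur n (x : nat -> R) :
  \sum_(0 <= i < n) (\sum_(0 <= j < n) kmax i j * x j) ^+ 2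
    <= 4 ^+ 2 * \sum_(0 <= j < n) x j ^+ 2.
Proof.
exact: (schur_test kmaxC kmax_ge0 binom_weight_gt0 (@kmax_row_binom_weight n)).
Qed.

End KmaxSchur.

Section KmaxCoercive.
Variable R : realFieldType.

Definition inv_succ_below n k : R := if (k < n)%N then (k.+1%:R)^-1 else 0.

Definition kmax_gap n k : R := inv_succ_below n k - inv_succ_below n k.+1.

Lemma kmax_sum_gap n i j : (i < n)%N -> (j < n)%N ->
  kmax R i j = \sum_(0 <= k < n) (if (maxn i j <= k)%N then kmax_gap n k else 0).
Proof.
move=> i_lt j_lt; have ij_lt : (maxn i j < n)%N by rewrite gtn_max i_lt.
rewrite (big_cat_nat _ (n := maxn i j)) ?(ltnW ij_lt) //= big1_seq ?add0r; last first.
  by move=> k; rewrite mem_index_iota => /and3P[_ _ k_lt]; rewrite leqNgt k_lt.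
rewrite (telescope_sumr_eq (fun k => - inv_succ_below n k)) ?(ltnW ij_lt) //.
  by rewrite /inv_succ_below ltnn ij_lt oppr0 opprK add0r /kmax maxnSS.
by move=> k /andP[k_ge _]; rewrite k_ge /kmax_gap opprK addrC.
Qed.

Lemma kmax_gap_ge n k : (k < n)%N -> (n%:R ^+ 2)^-1 <= kmax_gap n k.
Proof.
move=> k_lt; rewrite /kmax_gap /inv_succ_below k_lt.
have n_gt0 : (0 < n)%N by apply: leq_ltn_trans k_lt.
case: ltnP => [k1_lt | n_le].
- have -> : k.+1%:R^-1 - k.+2%:R^-1 = ((k.+1 * k.+2)%:R : R)^-1.
    have : k.+1%:R != 0 :> R by rewrite pnatr_eq0.
    have : k.+2%:R != 0 :> R by rewrite pnatr_eq0.
    rewrite natrM -!natr1 => nz2 nz1.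
    by field; rewrite nz1 nz2.
  rewrite lef_pV2 ?posrE ?exprn_gt0 ?ltr0n ?muln_gt0 // -natrX ler_nat.
  by rewrite expnS expn1 leq_mul // ltnW.
- have -> : n = k.+1 by apply/eqP; rewrite eqn_leq k_lt n_le.
  rewrite subr0 lef_pV2 ?posrE ?exprn_gt0 ?ltr0n // -natrX ler_nat.
  by rewrite expnS expn1 leq_pmulr.
Qed.

Lemma kmax_quadratic_form n (x : nat -> R) :
  \sum_(0 <= i < n) x i * \sum_(0 <= j < n) kmax R i j * x j
    = \sum_(0 <= k < n) kmax_gap n k * (\sum_(0 <= i < k.+1) x i) ^+ 2.
Proof.
pose S k := \sum_(0 <= i < n) (if (i <= k)%N then x i else 0).
have S_prefix k : (k < n)%N -> S k = \sum_(0 <= i < k.+1) x i.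
  move=> k_lt; rewrite /S (big_cat_nat _ (n := k.+1)) //= [X in _ + X]big1_seq.
    by rewrite addr0; apply: eq_big_nat => i /andP[_ i_le]; rewrite -ltnS i_le.
  by move=> i; rewrite mem_index_iota => /andP[_ /andP[k_lt' _]]; rewrite leqNgt k_lt'.
transitivity (\sum_(0 <= k < n) kmax_gap n k * S k ^+ 2); last first.
  by apply: eq_big_nat => k /andP[_ k_lt]; rewrite S_prefix.
transitivity (\sum_(0 <= i < n) \sum_(0 <= j < n) \sum_(0 <= k < n)
    x i * ((if (maxn i j <= k)%N then kmax_gap n k else 0) * x j)).
  apply: eq_big_nat => i /andP[_ i_lt]; rewrite mulr_sumr.
  apply: eq_big_nat => j /andP[_ j_lt].
  by rewrite (kmax_sum_gap i_lt j_lt) mulr_suml mulr_sumr.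
under eq_bigr do rewrite exchange_big_nat.
rewrite exchange_big_nat; apply: eq_bigr => k _.
rewrite /S expr2 mulr_suml mulr_sumr; apply: eq_bigr => i _.
rewrite mulr_sumr mulr_sumr; apply: eq_bigr => j _.
by rewrite geq_max; case: (i <= k)%N; case: (j <= k)%N => /=; ring.
Qed.

Lemma sum_sqr_le_prefix_sums n (x : nat -> R) :
  \sum_(0 <= i < n) x i ^+ 2 <= 4 * \sum_(0 <= k < n) (\sum_(0 <= i < k.+1) x i) ^+ 2.
Proof.
set T := fun m => \sum_(0 <= i < m) x i.
have x_diff i : x i = T i.+1 - T i by rewrite /T big_nat_recr //=; ring.
have step : \sum_(0 <= i < n) x i ^+ 2
    <= 2 * \sum_(0 <= i < n) T i.+1 ^+ 2 + 2 * \sum_(0 <= i < n) T i ^+ 2.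
  rewrite !mulr_sumr -big_split /=; apply: ler_sum_nat => i _.
  rewrite x_diff -subr_ge0.
  have -> : 2 * T i.+1 ^+ 2 + 2 * T i ^+ 2 - (T i.+1 - T i) ^+ 2
      = (T i.+1 + T i) ^+ 2 by ring.
  exact: sqr_ge0.
have shift : \sum_(0 <= i < n) T i ^+ 2 <= \sum_(0 <= i < n) T i.+1 ^+ 2.
  case: n {step} => [|m]; first by rewrite !big_geq.
  have T0 : T 0%N = 0 by rewrite /T big_geq.
  rewrite big_nat_recl // big_nat_recr //= T0 expr0n /= add0r addrC lerDr.
  exact: sqr_ge0.
by lra.
Qed.

Lemma kmax_coercive n (x : nat -> R) :
  \sum_(0 <= i < n) x i ^+ 2
    <= 4 * n%:R ^+ 2 * \sum_(0 <= i < n) x i * \sum_(0 <= j < n) kmax R i j * x j.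
Proof.
case: n => [|m]; first by rewrite !big_geq // mulr0.
have nsq_gt0 : (0 : R) < m.+1%:R ^+ 2 by rewrite exprn_gt0 // ltr0n.
rewrite kmax_quadratic_form.
apply: le_trans (sum_sqr_le_prefix_sums _ x) _.
rewrite -mulrA ler_pM2l // mulr_sumr; apply: ler_sum_nat => k /andP[_ k_lt].
rewrite mulrA -[leLHS]mul1r ler_wpM2r ?sqr_ge0 // -ler_pdivrMl // mulr1.
exact: kmax_gap_ge.
Qed.

End KmaxCoercive.

Section SquaredNorms.
Variable R : realType.

Definition sqnorm n (v : 'cV[R]_n) : R := \sum_(i < n) v i 0 ^+ 2.

Definition vdot n (u v : 'cV[R]_n) : R := \sum_(i < n) u i 0 * v i 0.

Lemma sqnorm_ge0 n (v : 'cV[R]_n) : 0 <= sqnorm v.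
Proof. by apply: sumr_ge0 => i _; apply: sqr_ge0. Qed.

Lemma sqnorm0 n : sqnorm (0 : 'cV[R]_n) = 0.
Proof. by rewrite /sqnorm big1 // => i _; rewrite mxE expr0n. Qed.

Lemma sqnorm_eq0 n (v : 'cV[R]_n) : sqnorm v = 0 -> v = 0.
Proof.
move=> v0; apply/matrixP => i j; rewrite (ord1 j) mxE.
have /eqP := psumr_eq0P (fun k _ => sqr_ge0 (v k 0)) v0 (i := i) isT.
by rewrite sqrf_eq0 => /eqP.
Qed.

Lemma vnorm2_le n (c : R) (u v : 'cV[R]_n) :
  0 <= c -> sqnorm u <= c ^+ 2 * sqnorm v -> vnorm2 u <= c * vnorm2 v.
Proof.
move=> c_ge0 uv; rewrite /vnorm2 -[c]ger0_norm // -sqrtr_sqr -sqrtrM ?sqr_ge0 //.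
exact: ler_wsqrtr.
Qed.

Lemma vdot_le_young n (a : R) (u v : 'cV[R]_n) :
  0 < a -> vdot u v <= (sqnorm u * a + sqnorm v / a) / 2.
Proof.
move=> a_gt0; rewrite /sqnorm !mulr_suml -big_split mulr_suml.
by apply: ler_sum => i _; apply: mul_le_young.
Qed.

Lemma sqnorm_le_of_coercive n (A : 'M[R]_n) (c : R) : 0 < c ->
  (forall z, sqnorm z <= c * vdot z (A *m z)) ->
  forall z, sqnorm z <= c ^+ 2 * sqnorm (A *m z).
Proof.
move=> c_gt0 coerc z; have cV_gt0 : 0 < c^-1 by rewrite invr_gt0.
have := vdot_le_young z (A *m z) cV_gt0.
rewrite invrK -(ler_pM2l c_gt0) => young.
have := le_trans (coerc z) young.
have -> : c * ((sqnorm z / c + sqnorm (A *m z) * c) / 2)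
    = sqnorm z / 2 + c ^+ 2 * sqnorm (A *m z) / 2 by field; rewrite gt_eqF.
lra.
Qed.

Lemma unitmx_of_bounded_below n (A : 'M[R]_n) (c : R) :
  (forall z, sqnorm z <= c * sqnorm (A *m z)) -> A \in unitmx.
Proof.
move=> bdd; rewrite -unitmx_tr unitmxE unitfE; apply/negP => /det0P[r r_nz rA].
have Az : A *m r^T = 0 by rewrite -[A]trmxK -trmx_mul rA trmx0.
have : sqnorm r^T = 0.
  by apply/eqP; rewrite eq_le sqnorm_ge0 andbT; have := bdd r^T; rewrite Az sqnorm0 mulr0.
by move/sqnorm_eq0/(congr1 trmx); rewrite trmxK trmx0; apply/eqP.
Qed.

Lemma opnorm_le n (A : 'M[R]_n.+1) (c : R) :
  0 <= c -> (forall x, sqnorm (A *m x) <= c ^+ 2 * sqnorm x) -> opnorm A <= c.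
Proof.
move=> c_ge0 bdd; apply: ge_sup.
  pose e : 'cV[R]_n.+1 := const_mx 1.
  exists (vnorm2 (A *m e) / vnorm2 e), e => //=.
  by apply/eqP => /matrixP/(_ ord0 ord0)/eqP; rewrite !mxE oner_eq0.
move=> _ [x _ <-]; have [-> | x_nz] := eqVneq (vnorm2 x) 0.
  by rewrite invr0 mulr0.
have x_gt0 : 0 < vnorm2 x by rewrite lt_def x_nz sqrtr_ge0.
by rewrite ler_pdivrMr // vnorm2_le.
Qed.

End SquaredNorms.

Section KmatBounds.
Variables (R : realType) (m : nat).
Local Notation n := m.+1.

Let coord (v : 'cV[R]_n) (k : nat) : R := v (inord k) 0.

Lemma sqnorm_coord (v : 'cV[R]_n) : sqnorm v = \sum_(0 <= i < n) coord v i ^+ 2.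
Proof. by rewrite big_mkord; apply: eq_bigr => i _; rewrite /coord inord_val. Qed.

Lemma Kmat_mul_coord (v : 'cV[R]_n) (i : 'I_n) :
  (Kmat R n *m v) i 0 = \sum_(0 <= j < n) kmax R i j * coord v j.
Proof. by rewrite mxE big_mkord; apply: eq_bigr => j _; rewrite /coord inord_val mxE. Qed.

Lemma Kmat_sqnorm_le (v : 'cV[R]_n) : sqnorm (Kmat R n *m v) <= 4 ^+ 2 * sqnorm v.
Proof.
have -> : sqnorm (Kmat R n *m v)
    = \sum_(0 <= i < n) (\sum_(0 <= j < n) kmax R i j * coord v j) ^+ 2.
  rewrite sqnorm_coord; apply: eq_big_nat => i /andP[_ i_lt].
  by rewrite /coord Kmat_mul_coord inordK.
by rewrite sqnorm_coord kmax_schur.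
Qed.

Lemma Kmat_coercive (v : 'cV[R]_n) :
  sqnorm v <= 4 * n%:R ^+ 2 * vdot v (Kmat R n *m v).
Proof.
have -> : vdot v (Kmat R n *m v)
    = \sum_(0 <= i < n) coord v i * \sum_(0 <= j < n) kmax R i j * coord v j.
  by rewrite big_mkord; apply: eq_bigr => i _; rewrite Kmat_mul_coord /coord inord_val.
by rewrite sqnorm_coord kmax_coercive.
Qed.

End KmatBounds.

Theorem proposition4 (R : realType) (n : nat) (hn : (1 <= n)%N) :
  [/\ Kmat R n \in unitmx,
      opnorm (Kmat R n) <= 4
    & opnorm (invmx (Kmat R n)) <= 4 * (n%:R) ^+ 2].
Proof.
case: n hn => [//|m] _.
have c_gt0 : 0 < 4 * m.+1%:R ^+ 2 :> R by rewrite mulr_gt0 // exprn_gt0 // ltr0n.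
have K_bdd := sqnorm_le_of_coercive c_gt0 (@Kmat_coercive R m).
have K_unit : Kmat R m.+1 \in unitmx := unitmx_of_bounded_below K_bdd.
split => //; first exact: opnorm_le (@Kmat_sqnorm_le R m).
apply: opnorm_le => [|x]; first exact: ltW.
by have := K_bdd (invmx (Kmat R m.+1) *m x); rewrite mulKVmx.
Qed.
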